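(* Let $k\ge 4$, $n=2k-1$, $\lambda\in\overline{\mathcal{U}}_{T_n}$, and let $Y=\mathrm{KN}(S_\lambda)$. Write the elements of $S_\lambda$ increasingly as $0=s_0<s_1<s_2<\cdots$ and let $z$ be the index with $s_z=n-2$. Then $$\sum_{i=2}^{z} h_{i,z+1}=k,$$ where $h_{i,j}$ denotes the hook length of the cell of $Y$ in row $i$ and column $j$.
   Context: A partition of $N$ into distinct parts is a sequence $\lambda=(\lambda_1<\dots<\lambda_t)$ of positive integers with sum $N$ and $t\ge 2$, identified with its set of parts. Missing parts: $\mathcal{M}_\lambda=\{1,\dots,\lambda_t\}\setminus\lambda$. $\lambda$ is refinable if two distinct missing parts sum to a part of $\lambda$, unrefinable otherwise; $\mathcal{U}_N$ is the set of unrefinable partitions of $N$. An element of $\mathcal{U}_N$ is maximal if its largest part is the maximum of the largest parts of elements of $\mathcal{U}_N$; $\widetilde{\mathcal{U}}_N$ is the set of these and $\overline{\mathcal{U}}_N=\{\lambda\in\widetilde{\mathcal{U}}_N:\#\mathcal{M}_\lambda=\lfloor\lambda_t/2\rfloor\}$. $T_n=n(n+1)/2$. For $\lambda\in\overline{\mathcal{U}}_{T_n}$ (with $n=2k-1$, $k\ge 4$) one knows $\lambda_t=2n-4$, $t=n-2$ and $n-2\notin\lambda$. $S_\lambda=\mathbb{N}_0\setminus\lambda$. The Keith–Nath transformation sends a set $S\subseteq\mathbb{N}_0$ with $0\in S$ and finite complement to the Young diagram $\mathrm{KN}(S)$ whose boundary is the lattice path that, starting at the origin, takes for $j=0,1,\dots,\max(\mathbb{N}_0\setminus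 S)$ an east step if $j\in S$ and a north step otherwise. Diagrams are in English convention (rows numbered top to bottom, columns left to right); hook length = (cells to the right in the row) + (cells below in the column) + 1. *)

From mathcomp Require Import all_boot.
Set Implicit Arguments. Unset Strict Implicit. Unset Printing Implicit Defensive.

(* A partition into distinct parts is represented by the strictly increasing
   list of its parts (identified with its set of parts). *)
Definition largest (lam : seq nat) : nat := last 0 lam.

Definition distinct_partition (N : nat) (lam : seq nat) : bool :=
  [&& sorted ltn lam, 0 \notin lam, sumn lam == N & 2 <= size lam].

Definition missing (lam : seq nat) : seq nat :=
  [seq x <- iota 1 (largest lam) | x \notin lam].

Definition refinable (lam : seq nat) : bool :=
  has (fun a => has (fun b => (a != b) && (a + b \in lam)) (missing lam))
      (missing lam).

Definition unrefinable (N : nat) (lam : seq nat) : bool :=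
  distinct_partition N lam && ~~ refinable lam.

Definition maximal_unref (N : nat) (lam : seq nat) : Prop :=
  unrefinable N lam /\
  forall mu : seq nat, unrefinable N mu -> largest mu <= largest lam.

Definition Ubar (N : nat) (lam : seq nat) : Prop :=
  maximal_unref N lam /\ size (missing lam) = (largest lam)./2.

Definition T (n : nat) : nat := (n * n.+1)./2.

Definition S_lam (lam : seq nat) : pred nat := fun x => x \notin lam.

(* the i-th element (0-indexed, increasing) of S_lam; the range
   [0, i + size lam] contains at least i+1 elements of S_lam *)
Definition Selem (lam : seq nat) (i : nat) : nat :=
  nth 0 [seq x <- iota 0 (i + size lam).+1 | S_lam lam x] i.

(* Keith--Nath: the boundary lattice path, as a list of steps for
   j = 0, ..., m (true = east step when j \in S, false = north step). *)
Definition KN_path (S : pred nat) (m : nat) : seq bool :=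
  [seq S j | j <- iota 0 m.+1].

Definition north_pos (p : seq bool) : seq nat :=
  [seq j <- iota 0 (size p) | ~~ nth false p j].

Definition nrows (p : seq bool) : nat := size (north_pos p).

(* Young diagram bounded by the path (English convention): row i (1-indexed,
   top to bottom) corresponds to the i-th north step counted from the end of
   the path; its length is the number of east steps preceding it. *)
Definition rowlen (p : seq bool) (i : nat) : nat :=
  if (1 <= i <= nrows p) then count id (take (nth 0 (rev (north_pos p)) i.-1) p)
  else 0.

Definition in_diagram (p : seq bool) (i j : nat) : bool :=
  (1 <= i <= nrows p) && (1 <= j <= rowlen p i).

Definition collen (p : seq bool) (j : nat) : nat :=
  count (fun i => in_diagram p i j) (iota 1 (nrows p)).

Definition hook (p : seq bool) (i j : nat) : nat :=
  (rowlen p i - j) + (collen p j - i) + 1.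

(* Y = KN(S_lam); max(N_0 \ S_lam) = largest lam *)
Definition KN_lam (lam : seq nat) : seq bool := KN_path (S_lam lam) (largest lam).

From mathcomp Require Import all_boot zify.
Set Implicit Arguments. Unset Strict Implicit. Unset Printing Implicit Defensive.

(* The explicit unrefinable partition {1, ..., n-3, n+1, 2n-4} of T_n shows that
   the largest part m of lambda is at least 2n-4.  Unrefinability forbids a and
   m - a to be both missing, so each pair {a, m - a} (and the middle m/2) holds at
   most one missing part; since exactly floor(m/2) parts are missing, each holds
   exactly one.  Thus lambda is {1, ..., q}, q = floor((m-1)/2), with every missing
   a replaced by m - a, and T_n = m + T_q + sum_(a <= q missing) (m - 2a) only
   allows m = 2n-4, where sum_(a < n-2 missing) (n-2-a) = (n+1)/2 = k.
   In KN(S_lambda) the cell in the row of a part x and the column of a gap s < x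
   has hook length x - s.  Column z+1 is the column of the gap s_z = n-2, and rows
   2, ..., z are the parts strictly between n-2 and 2n-4, namely the 2n-4-a for
   the missing a < n-2, whose hooks n-2-a add up to k. *)

Lemma count_lt_nth (s : seq nat) j : sorted ltn s -> j < size s ->
  count (fun v => v < nth 0 s j) s = j.
Proof.
elim: s j => [//|x s IHs] j /[dup] /path_sorted s_sorted.
rewrite /= (path_sortedE ltn_trans) => /andP[/allP x_lt _].
case: j => [_|j j_lt] /=.
  by rewrite ltnn (eq_in_count (a2 := pred0)) ?count_pred0 // => v /x_lt /=; lia.
by rewrite IHs // (x_lt _ (mem_nth 0 j_lt)).
Qed.

Lemma count_leq_nth (s : seq nat) j : sorted ltn s -> j < size s ->
  count (fun v => v <= nth 0 s j) s = j.+1.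
Proof.
elim: s j => [//|x s IHs] j /[dup] /path_sorted s_sorted.
rewrite /= (path_sortedE ltn_trans) => /andP[/allP x_lt _].
case: j => [_|j j_lt] /=.
  by rewrite leqnn (eq_in_count (a2 := pred0)) ?count_pred0 // => v /x_lt /=; lia.
by rewrite IHs // ltnW // (x_lt _ (mem_nth 0 j_lt)).
Qed.

Lemma count_lt_add_geq (s : seq nat) x :
  count (fun v => v < x) s + count (fun v => x <= v) s = size s.
Proof.
rewrite -(count_predC (fun v => v < x)); congr addn.
by apply: eq_count => v; rewrite /= -leqNgt.
Qed.

Lemma count_lt_add_gt (s : seq nat) x : x \notin s ->
  count (fun v => v < x) s + count (fun v => x < v) s = size s.
Proof.
move=> x_notin; rewrite -(count_lt_add_geq s x); congr addn.
apply: eq_in_count => v v_in /=; rewrite ltn_neqAle; case: eqP => // x_eq.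
by rewrite x_eq v_in in x_notin.
Qed.

Lemma big_nat_tail_rev (F : nat -> nat) m k : k < m ->
  \sum_(m - k <= x < m) F x = \sum_(1 <= a < k.+1) F (m - a).
Proof.
elim: k => [|k IHk] k_lt; first by rewrite subn0 !big_geq.
rewrite big_nat_recr //= -IHk; last lia.
rewrite big_ltn; last lia.
by rewrite (_ : (m - k.+1).+1 = m - k) 1?addnC //; lia.
Qed.

Lemma big_nat_fold (F : nat -> nat) m q : q.*2 < m ->
  \sum_(1 <= x < m) F x
  = \sum_(1 <= a < q.+1) (F a + F (m - a)) + \sum_(q.+1 <= x < m - q) F x.
Proof.
move=> q_lt; rewrite (@big_cat_nat _ _ _ q.+1) /=; [|lia|lia].
rewrite (@big_cat_nat _ _ _ (m - q) q.+1) /=; [|lia|lia].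
by rewrite big_nat_tail_rev; [rewrite big_split /= -!addnA [X in _ + X]addnC | lia].
Qed.

Lemma eq_of_leq_sum (I : eqType) (r : seq I) (F G : I -> nat) :
  (forall i, i \in r -> F i <= G i) -> \sum_(i <- r) G i <= \sum_(i <- r) F i ->
  forall i, i \in r -> F i = G i.
Proof.
move=> FG GF i i_r; apply/eqP; rewrite eqn_leq FG //=.
have : \sum_(j <- r | j \in r) (G j - F j) == 0.
  by rewrite sumnB // -!big_seq subn_eq0.
by rewrite sum_nat_seq_eq0 => /allP /(_ i i_r); rewrite i_r subn_eq0.
Qed.

(* A gap s is the element s_j of S_lam with j = gaps_below lam s; its east step
   borders column j + 1 of KN(S_lam). *)
Definition gaps_below (lam : seq nat) (x : nat) : nat :=
  count (fun j => j \notin lam) (iota 0 x).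

Lemma gaps_belowS lam x : gaps_below lam x.+1 = gaps_below lam x + (x \notin lam).
Proof. by rewrite /gaps_below -addn1 iotaD count_cat /= addn0. Qed.

Lemma leq_gaps_below lam : {homo gaps_below lam : x y / x <= y}.
Proof. by move=> x y /subnKC <-; rewrite /gaps_below iotaD count_cat leq_addr. Qed.

Lemma ltn_gaps_below lam s x : s \notin lam ->
  (gaps_below lam s < gaps_below lam x) = (s < x).
Proof.
move=> s_gap; case: (ltnP s x) => [s_lt_x | x_le_s].
  by apply: leq_trans (leq_gaps_below lam s_lt_x); rewrite gaps_belowS s_gap addn1.
by apply/negbTE; rewrite -leqNgt leq_gaps_below.
Qed.

Lemma gaps_below_add_count lam x : uniq lam ->
  gaps_below lam x + count (fun v => v < x) lam = x.
Proof.
move=> lam_uniq; have -> : count (fun v => v < x) lam = count (mem lam) (iota 0 x).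
  rewrite -!size_filter; apply/perm_size/uniq_perm; rewrite ?filter_uniq ?iota_uniq //.
  by move=> v; rewrite !mem_filter mem_iota andbC.
by rewrite addnC -[RHS](size_iota 0 x) -(count_predC (mem lam)).
Qed.

(* [0 < y] excludes the default value of [nth]. *)
Lemma Selem_gaps_below lam z y : 0 < y -> Selem lam z = y -> gaps_below lam y = z.
Proof.
rewrite /Selem; set F := filter _ _ => y_pos Fz.
have z_lt : z < size F.
  by rewrite ltnNge; apply/negP => /(nth_default 0); rewrite Fz; lia.
have F_sorted : sorted ltn F.
  by apply: sorted_filter; [exact: ltn_trans | exact: iota_ltn_sorted].
have /ltnW y_le : y < (z + size lam).+1.
  by have := mem_nth 0 z_lt; rewrite Fz mem_filter mem_iota => /andP[_].
rewrite -(count_lt_nth F_sorted z_lt) Fz count_filter /gaps_below.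
rewrite -(filter_iota_ltn 0 y_le) count_filter; apply: eq_count => v /=.
exact: andbC.
Qed.

(* The part whose north step ends row i of KN(S_lam), rows numbered from 1 downwards. *)
Definition row_part (lam : seq nat) (i : nat) : nat := nth 0 (rev lam) i.-1.

Lemma row_part1 lam : row_part lam 1 = largest lam.
Proof. by case: (lastP lam) => [|s x] //; rewrite /row_part rev_rcons /largest last_rcons. Qed.

Section StrictlyIncreasingParts.

Variable lam : seq nat.
Hypothesis lam_sorted : sorted ltn lam.

Lemma leq_largest x : x \in lam -> x <= largest lam.
Proof.
move=> x_in; have size_pos : 0 < size lam by rewrite -has_predT; apply/hasP; exists x.
have := count_leq_nth lam_sorted (_ : (size lam).-1 < size lam).
rewrite nth_last prednK ?ltn_predL // => /(_ (leqnn _)) /eqP.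
by rewrite -all_count => /allP; apply.
Qed.

Lemma filter_iota_largest : [seq x <- iota 0 (largest lam).+1 | x \in lam] = lam.
Proof.
apply: (irr_sorted_eq ltn_trans ltnn) => //.
  by apply: sorted_filter; [exact: ltn_trans | exact: iota_ltn_sorted].
move=> x; rewrite mem_filter mem_iota add0n ltnS /=.
by case x_in: (x \in lam); rewrite //= leq_largest.
Qed.

Lemma big_parts_nat (P : pred nat) (F : nat -> nat) :
  \sum_(x <- lam | P x) F x = \sum_(0 <= x < (largest lam).+1 | (x \in lam) && P x) F x.
Proof. by rewrite -[in LHS]filter_iota_largest big_filter_cond /index_iota subn0. Qed.

Lemma size_missing_add_size : 0 \notin lam -> size (missing lam) + size lam = largest lam.
Proof.
move=> zero_notin; rewrite -[in size lam]filter_iota_largest size_filter /=.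
by rewrite (negbTE zero_notin) /missing size_filter addnC count_predC size_iota.
Qed.

Lemma north_pos_KN_lam : north_pos (KN_lam lam) = lam.
Proof.
rewrite -[RHS]filter_iota_largest /north_pos /KN_lam /KN_path size_map size_iota.
apply: eq_in_filter => j; rewrite mem_iota => j_lt.
by rewrite (nth_map 0) ?size_iota // nth_iota // negbK.
Qed.

Lemma nrows_KN_lam : nrows (KN_lam lam) = size lam.
Proof. by rewrite /nrows north_pos_KN_lam. Qed.

Lemma row_partE i : 0 < i <= size lam -> row_part lam i = nth 0 lam (size lam - i).
Proof. by move=> /andP[i_pos i_le]; rewrite /row_part nth_rev ?prednK //; lia. Qed.

Lemma row_part_in i : 0 < i <= size lam -> row_part lam i \in lam.
Proof.
move=> /[dup] i_bd /andP[i_pos i_le].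
by rewrite row_partE // mem_nth // ltn_subrL i_pos (leq_trans i_pos i_le).
Qed.

Lemma count_geq_row_part i : 0 < i <= size lam ->
  count (fun v => row_part lam i <= v) lam = i.
Proof.
move=> i_bd; have := count_lt_add_geq lam (row_part lam i).
rewrite {1}row_partE // count_lt_nth //; lia.
Qed.

Lemma count_gtn_row_part i : 0 < i <= size lam ->
  count (fun v => row_part lam i < v) lam = i.-1.
Proof.
move=> i_bd; have := count_lt_add_geq lam (row_part lam i).+1.
rewrite {1}row_partE // count_leq_nth //; lia.
Qed.

Lemma ltn_row_part s i : 0 < i ->
  (s < row_part lam i) = (i <= count (fun v => s < v) lam).
Proof.
move=> i_pos; case: (leqP i (size lam)) => [i_le | size_lt]; last first.
  have := count_size (fun v => s < v) lam.
  by rewrite /row_part nth_default ?size_rev; lia.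
have i_bd : 0 < i <= size lam by rewrite i_pos.
case: ltnP => [s_lt | le_s].
  by apply/esym; rewrite -{1}(count_geq_row_part i_bd); apply: sub_count => v /=; lia.
apply/esym/negbTE; rewrite -ltnNge.
apply: (@leq_ltn_trans (count (fun v => row_part lam i < v) lam)).
  by apply: sub_count => v /=; lia.
by rewrite count_gtn_row_part //; lia.
Qed.

Lemma ltn_row_part_largest i : 0 < i <= size lam -> (row_part lam i < largest lam) = (1 < i).
Proof. by move=> i_bd; rewrite -row_part1 ltn_row_part // count_gtn_row_part //; lia. Qed.

Lemma rowlen_KN_lam i : 0 < i <= size lam ->
  rowlen (KN_lam lam) i = gaps_below lam (row_part lam i).
Proof.
move=> i_bd; rewrite /rowlen nrows_KN_lam i_bd north_pos_KN_lam -/(row_part lam i).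
rewrite /KN_lam /KN_path -map_take take_iota count_map.
by rewrite (minn_idPl (leqW (leq_largest (row_part_in i_bd)))).
Qed.

Lemma collen_KN_lam s : s \notin lam ->
  collen (KN_lam lam) (gaps_below lam s).+1 = count (fun v => s < v) lam.
Proof.
move=> s_gap; set c := count _ lam; have c_le : c <= size lam := count_size _ _.
rewrite /collen nrows_KN_lam (eq_in_count (a2 := fun i => i < 1 + c)).
  by rewrite -size_filter filter_iota_ltn // size_iota.
move=> i; rewrite mem_iota => i_bd.
rewrite /in_diagram nrows_KN_lam rowlen_KN_lam; last lia.
rewrite ltn_gaps_below // ltn_row_part; lia.
Qed.

Lemma hook_KN_lam s i : s \notin lam -> 0 < i <= size lam -> s < row_part lam i ->
  hook (KN_lam lam) i (gaps_below lam s).+1 = row_part lam i - s.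
Proof.
move=> s_gap i_bd s_lt; rewrite /hook rowlen_KN_lam // collen_KN_lam //.
have lam_uniq := sorted_uniq ltn_trans ltnn lam_sorted.
have gaps_x := gaps_below_add_count (row_part lam i) lam_uniq.
have gaps_s := gaps_below_add_count s lam_uniq.
have split_x := count_lt_add_geq lam (row_part lam i).
have split_s := count_lt_add_gt s_gap.
have rank_x := count_geq_row_part i_bd.
have gaps_lt : gaps_below lam s < gaps_below lam (row_part lam i) by rewrite ltn_gaps_below.
have count_le : count (fun v => row_part lam i <= v) lam <= count (fun v => s < v) lam.
  by apply: sub_count => v /=; lia.
lia.
Qed.

Lemma sum_row_parts (F : nat -> nat) s :
  \sum_(2 <= i < (count (fun v => s < v) lam).+1) F (row_part lam i)
  = \sum_(x <- lam | s < x < largest lam) F x.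
Proof.
set c := count _ lam; have c_le : c <= size lam := count_size _ _.
have -> : \sum_(x <- lam | s < x < largest lam) F x
  = \sum_(1 <= i < (size lam).+1 | s < row_part lam i < largest lam) F (row_part lam i).
  by rewrite big_add1 -(big_rev _ lam) (big_nth 0) size_rev.
rewrite (big_nat_widen _ _ (size lam).+1) // (big_nat_widenl _ 1) //.
rewrite big_nat_cond [RHS]big_nat_cond; apply: eq_bigl => i /=.
case: (boolP (0 < i <= size lam)) => i_bd; rewrite ?andbF //=.
by rewrite ltn_row_part ?ltn_row_part_largest //; lia.
Qed.

Lemma sum_hooks_KN_lam s : s \notin lam ->
  \sum_(2 <= i < (count (fun v => s < v) lam).+1) hook (KN_lam lam) i (gaps_below lam s).+1
  = \sum_(x <- lam | s < x < largest lam) (x - s).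
Proof.
move=> s_gap; rewrite -sum_row_parts; apply: eq_big_nat => i i_bd.
have c_le := count_size (fun v => s < v) lam.
by rewrite hook_KN_lam // ?ltn_row_part; lia.
Qed.

End StrictlyIncreasingParts.

Lemma T_double n : (T n).*2 = n * n.+1.
Proof. by rewrite /T halfK oddM /= andbN subn0. Qed.

Lemma sum_nat_T q : \sum_(1 <= a < q.+1) a = T q.
Proof. by rewrite -[LHS]add0n -big_ltn // bin2_sum bin2 /T mulnC. Qed.

Lemma not_refinable_complement lam a : ~~ refinable lam -> largest lam \in lam ->
  0 < a < largest lam -> a + a != largest lam -> (a \in lam) || (largest lam - a \in lam).
Proof.
move=> /hasPn unref m_in a_bd a_ne; apply/negPn/negP; rewrite negb_or => /andP[a_gap b_gap].
have gap_missing x : x \notin lam -> 0 < x <= largest lam -> x \in missing lam.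
  by move=> x_gap x_bd; rewrite mem_filter x_gap mem_iota; lia.
have a_miss : a \in missing lam by apply: gap_missing a_gap _; lia.
have b_miss : largest lam - a \in missing lam by apply: gap_missing b_gap _; lia.
have /hasPn/(_ _ b_miss) := unref a a_miss.
by rewrite subnKC ?m_in ?andbT ?negbK; lia.
Qed.

Lemma not_refinable_of_missing_geq lam a : sorted ltn lam -> largest lam <= a.*2 ->
  (forall x, x \in missing lam -> a <= x) -> ~~ refinable lam.
Proof.
move=> lam_sorted m_le missing_ge; apply/hasPn => x x_miss; apply/hasPn => y y_miss.
apply/negP => /andP[x_ne /(leq_largest lam_sorted)].
by have := missing_ge x x_miss; have := missing_ge y y_miss; lia.
Qed.

Definition witness (n : nat) : seq nat := iota 1 (n - 3) ++ [:: n.+1; (n - 2).*2].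

Lemma largest_witness n : largest (witness n) = (n - 2).*2.
Proof. by rewrite /largest last_cat. Qed.

Lemma witness_unrefinable n : 6 <= n -> unrefinable (T n) (witness n).
Proof.
move=> n_ge; have mem_w x : (x \in witness n) = [|| 0 < x < n - 2, x == n.+1 | x == (n - 2).*2].
  by rewrite mem_cat mem_iota !inE (_ : 1 + (n - 3) = n - 2) //; lia.
have w_sorted : sorted ltn (witness n).
  rewrite (sorted_pairwise ltn_trans) pairwise_cat; apply/and3P; split.
  - by apply/allrelP => x y; rewrite mem_iota !inE => x_bd /orP[] /eqP ->; lia.
  - by rewrite -(sorted_pairwise ltn_trans) iota_ltn_sorted.
  - by rewrite /= !andbT; lia.
apply/andP; split; last first.
  apply: not_refinable_of_missing_geq w_sorted (_ : _ <= (n - 2).*2) _; rewrite ?largest_witness //.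
  move=> x; rewrite mem_filter mem_iota mem_w largest_witness; lia.
apply/and4P; split=> //; first by rewrite mem_w; lia.
- rewrite sumn_cat sumnE (_ : iota 1 (n - 3) = index_iota 1 (n - 3).+1); last first.
    by rewrite /index_iota subSS subn0.
  rewrite sum_nat_T /=; apply/eqP.
  have := T_double (n - 3); have := T_double n.
  have [p ->] : exists p, n = p + 6 by exists (n - 6); lia.
  rewrite (_ : p + 6 - 3 = p + 3); last lia.
  by nia.
- by rewrite size_cat /= addn2.
Qed.

Lemma largest_ge_of_maximal n lam : 6 <= n -> maximal_unref (T n) lam ->
  (n - 2).*2 <= largest lam.
Proof. by move=> n_ge [_ max]; rewrite -largest_witness; apply/max/witness_unrefinable. Qed.

Lemma largest_in lam : 0 < largest lam -> largest lam \in lam.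
Proof. by case: lam => [|x s] //= _; exact: mem_last. Qed.

Lemma size_missingE lam : largest lam \in lam ->
  size (missing lam) = \sum_(1 <= x < largest lam) (x \notin lam).
Proof.
move=> m_in; rewrite /missing size_filter -sum1_count big_mkcond.
have [-> | m_pos] := posnP (largest lam); first by rewrite big_geq.
rewrite (_ : iota 1 _ = index_iota 1 (largest lam).+1); last by rewrite /index_iota subSS subn0.
by rewrite big_nat_recr //= m_in addn0.
Qed.

(* Each pair {a, m - a} and the middle block contain at most one element outside
   P; m./2 is the number of these blocks, so each contains exactly one. *)
Lemma complement_of_half_count (P : pred nat) m q : q.*2 < m <= q.*2.+2 ->
  (forall a, 0 < a <= q -> P a || P (m - a)) ->
  \sum_(1 <= x < m) ~~ P x = m./2 ->
  (forall a, 0 < a <= q -> P (m - a) = ~~ P a) /\ (forall x, q < x < m - q -> ~~ P x).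
Proof.
move=> m_bd pair_cover; rewrite (big_nat_fold _ (proj1 (andP m_bd))) => count_half.
have pair_le1 a : a \in index_iota 1 q.+1 -> ~~ P a + ~~ P (m - a) <= 1.
  by rewrite mem_index_iota => /pair_cover; case: (P a); case: (P (m - a)).
have mid_le1 x : x \in index_iota q.+1 (m - q) -> ~~ P x <= 1 by case: (P x).
have pairs_le : \sum_(1 <= a < q.+1) (~~ P a + ~~ P (m - a)) <= \sum_(1 <= a < q.+1) 1.
  by rewrite big_seq_cond [X in _ <= X]big_seq_cond; apply: leq_sum => a /andP[/pair_le1].
have mid_le : \sum_(q.+1 <= x < m - q) ~~ P x <= \sum_(q.+1 <= x < m - q) 1.
  by rewrite big_seq_cond [X in _ <= X]big_seq_cond; apply: leq_sum => x /andP[/mid_le1].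
move: pairs_le mid_le; rewrite !sum_nat_const_nat => pairs_le mid_le.
split=> [a a_bd | x x_bd].
- have pairs_full : \sum_(1 <= a < q.+1) 1 <= \sum_(1 <= a < q.+1) (~~ P a + ~~ P (m - a)).
    by rewrite sum_nat_const_nat; lia.
  have a_in : a \in index_iota 1 q.+1 by rewrite mem_index_iota; lia.
  have := eq_of_leq_sum (F := fun a => ~~ P a + ~~ P (m - a)) pair_le1 pairs_full a_in.
  by case: (P a); case: (P (m - a)).
- have mid_full : \sum_(q.+1 <= x < m - q) 1 <= \sum_(q.+1 <= x < m - q) ~~ P x.
    by rewrite sum_nat_const_nat; lia.
  have x_in : x \in index_iota q.+1 (m - q) by rewrite mem_index_iota; lia.
  have := eq_of_leq_sum (F := fun x => nat_of_bool (~~ P x)) mid_le1 mid_full x_in.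
  by case: (P x).
Qed.

Lemma sumn_complementary lam q : sorted ltn lam -> q.*2 < largest lam ->
  (forall a, 0 < a <= q -> (largest lam - a \in lam) = (a \notin lam)) ->
  (forall x, q < x < largest lam - q -> x \notin lam) ->
  sumn lam = largest lam + \sum_(1 <= a < q.+1) (a + (a \notin lam) * (largest lam - a.*2)).
Proof.
move=> lam_sorted q_lt compl mid; have m_in := largest_in (leq_ltn_trans (leq0n _) q_lt).
rewrite sumnE big_parts_nat // big_mkcond big_nat_recr //= big_ltn ?(leq_ltn_trans _ q_lt) //=.
have mid0 : \sum_(q.+1 <= x < largest lam - q) (if (x \in lam) && true then x else 0) = 0.
  by rewrite big_nat_cond big1 // => x /andP[/mid/negbTE ->].
rewrite if_same m_in add0n addnC (big_nat_fold _ q_lt) mid0 addn0.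
congr (_ + _); apply: eq_big_nat => a a_bd; rewrite compl ?andbT; last lia.
by case: (a \in lam) => /=; lia.
Qed.

Lemma sum_odd_weights_neq2 (c : pred nat) q :
  \sum_(1 <= a < q.+1) c a * (q.*2.+1 - a.*2) != 2.
Proof.
have odd_sum (b : pred nat) k : \sum_(1 <= a < k.+1) b a * (a.*2.-1) != 2.
  elim: k => [|k IHk]; first by rewrite big_geq.
  rewrite big_nat_recr //=; case: (b k.+1); last by rewrite mul0n addn0.
  by case: k IHk => [|k] _; [rewrite big_geq | lia].
rewrite big_nat_rev; under eq_big_nat => a a_bd.
  rewrite (_ : q.*2.+1 - (1 + q.+1 - a.+1).*2 = a.*2.-1); last by lia.
  over.
exact: odd_sum.
Qed.

(* q >= n - 1 overshoots T n, and q = n - 2 leaves m + R = 2n - 1, which neither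
   parity allows; hence q = n - 3. *)
Lemma T_decomposition_eq n m q R : 6 <= n -> (n - 2).*2 <= m -> q.*2 < m <= q.*2.+2 ->
  (odd m -> R != 2) -> (~~ odd m -> ~~ odd R) -> m + T q + R = T n ->
  m = (n - 2).*2 /\ R = n.+1.
Proof.
move=> n_ge m_ge m_bd R_odd R_even sum_eq.
have Tq := T_double q; have Tn := T_double n.
have [p n_eq] : exists p, n = p + 6 by exists (n - 6); lia.
subst n; case: (ltngtP q (p + 4)) => [q_lt | q_gt | q_eq].
- have [m_eq q_eq] : m = (p + 4).*2 /\ q = p + 3 by lia.
  subst; split=> //; nia.
- by exfalso; have := leq_mul q_gt q_gt; nia.
- subst q; have mR : m + R = (p + 6).*2 - 1 by nia.
  by case/boolP: (odd m) => [/R_odd | /R_even]; lia.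
Qed.

Lemma Ubar_T_structure n lam : 6 <= n -> Ubar (T n) lam ->
  [/\ largest lam = (n - 2).*2, n - 2 \notin lam,
      forall a, 0 < a < n - 2 -> ((n - 2).*2 - a \in lam) = (a \notin lam) &
      (\sum_(1 <= a < n - 2) (a \notin lam) * (n - 2 - a)).*2 = n.+1].
Proof.
move=> n_ge [[lam_unref max] size_miss].
have m_ge := largest_ge_of_maximal n_ge (conj lam_unref max).
case/andP: lam_unref => /and4P[lam_sorted _ /eqP lam_sum _] unref.
set m := largest lam in m_ge size_miss *; set q := (m.-1)./2.
have m_bd : q.*2 < m <= q.*2.+2 by rewrite /q; lia.
have m_in : m \in lam by apply: largest_in; lia.
have count_half : \sum_(1 <= x < m) ~~ (x \in lam) = m./2 by rewrite -size_miss size_missingE.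
have [compl mid] : (forall a, 0 < a <= q -> (m - a \in lam) = (a \notin lam)) /\
                   (forall x, q < x < m - q -> x \notin lam).
  apply: (complement_of_half_count (P := fun x => x \in lam)) m_bd _ count_half.
  by move=> a a_bd; apply: not_refinable_complement => //; lia.
set R := \sum_(1 <= a < q.+1) (a \notin lam) * (m - a.*2).
have R_odd : odd m -> R != 2.
  by move=> m_odd; rewrite /R (_ : m = q.*2.+1) ?sum_odd_weights_neq2 //; lia.
have R_half : ~~ odd m -> R = (\sum_(1 <= a < q.+1) (a \notin lam) * (q.+1 - a)).*2.
  move=> m_even; rewrite /R -mul2n big_distrr /=.
  by apply: eq_big_nat => a a_bd; case: (a \notin lam) => /=; lia.
have R_even : ~~ odd m -> ~~ odd R by move=> m_even; rewrite R_half // odd_double.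
have sum_split : m + T q + R = T n.
  rewrite -lam_sum (sumn_complementary lam_sorted (proj1 (andP m_bd)) compl mid).
  by rewrite big_split sum_nat_T addnA.
have [m_eq R_eq] := T_decomposition_eq n_ge m_ge m_bd R_odd R_even sum_split.
have q_eq : q.+1 = n - 2 by rewrite /q m_eq; lia.
split=> //.
- by apply: mid; lia.
- by move=> a a_bd; rewrite -m_eq compl //; lia.
- by rewrite -q_eq -R_half -?R_eq // m_eq odd_double.
Qed.

Lemma sum_upper_parts lam y : sorted ltn lam -> largest lam = y.*2 -> 0 < y ->
  (forall a, 0 < a < y -> (y.*2 - a \in lam) = (a \notin lam)) ->
  \sum_(x <- lam | y < x < largest lam) (x - y) = \sum_(1 <= a < y) (a \notin lam) * (y - a).
Proof.
move=> lam_sorted m_eq y_pos compl.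
have -> : \sum_(x <- lam | y < x < largest lam) (x - y)
        = \sum_(y.*2 - y.-1 <= x < y.*2) (x \in lam) * (x - y).
  rewrite big_parts_nat // m_eq.
  rewrite [RHS](big_nat_widen _ _ (y.*2).+1) // [RHS](big_nat_widenl _ 0) //.
  rewrite [RHS]big_mkcond [LHS]big_mkcond; apply: eq_bigr => x _ /=.
  by case: (x \in lam) => /=; do 2 case: ifP => //=; lia.
rewrite big_nat_tail_rev ?prednK //; last lia.
apply: eq_big_nat => a a_bd; rewrite compl //; lia.
Qed.

Theorem proposition3p10 (k n : nat) (lam : seq nat) (z : nat) :
  4 <= k -> n = 2 * k - 1 -> Ubar (T n) lam -> Selem lam z = n - 2 ->
  \sum_(2 <= i < z.+1) hook (KN_lam lam) i z.+1 = k.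
Proof.
move=> k_ge n_eq lam_Ubar Selem_z.
have [|m_eq y_gap compl deficiency] := Ubar_T_structure _ lam_Ubar; first lia.
have [[/andP[/and4P[lam_sorted zero_notin _ _] _] _] size_miss] := lam_Ubar.
have z_eq : gaps_below lam (n - 2) = z by apply: Selem_gaps_below Selem_z; lia.
have above_eq : count (fun v => n - 2 < v) lam = z.
  have := size_missing_add_size lam_sorted zero_notin.
  have := gaps_below_add_count (n - 2) (sorted_uniq ltn_trans ltnn lam_sorted).
  have := count_lt_add_gt y_gap.
  rewrite size_miss m_eq z_eq; lia.
rewrite -{1}above_eq -z_eq sum_hooks_KN_lam // sum_upper_parts //; lia.
Qed.
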